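(* Let $k$ be a field of characteristic zero and $X,H$ finite groups. Let $\pi:kA(H,H)\to k\mathrm{Out}(H)$ be the quotient map and $\tau$ the usual symmetrizing form on $k\mathrm{Out}(H)$ (coefficient of $1$). Then the symmetric bilinear form on $k\bar A(X,H)$ defined by $\langle\bar\alpha,\bar\beta\rangle_X=\tau\pi(\alpha^{op}\beta)$ (for representatives $\alpha,\beta\in kA(X,H)$) is non-degenerate.
   Context: For finite groups $X,Y$, $kB(X,Y)=k\otimes_{\mathbb Z}B(X,Y)$ with $B(X,Y)$ the Grothendieck group of finite $(X,Y)$-bisets; composition $U\times_YV$ extended bilinearly; the opposite $U^{op}$ is the same set with $y\cdot u\cdot x=x^{-1}uy^{-1}$. $kA(X,Y)\subseteq kB(X,Y)$ is the span of the bisets that are free on the left and on the right (spanned by $\mathrm{Ind}^X_A\mathrm{Iso}_\sigma\mathrm{Res}^Y_S$, $A\le X$, $S\le Y$, $\sigma:S\to A$ an isomorphism). $kI_A(X,H)=\sum_K kA(X,K)kA(K,H)$ over groups $K$ isomorphic to a proper subgroup of $H$, and $k\bar A(X,H)=kA(X,H)/kI_A(X,H)$; then $k\bar A(H,H)\cong k\mathrm{Out}(H)$ (via $\sigma\mapsto\mathrm{Iso}_\sigma$) and $\pi$ is the quotient map $kA(H,H)\to k\bar A(H,H)$. The form is well defined. *)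

From HB Require Import structures.
From mathcomp Require Import all_boot all_order all_algebra all_fingroup.
From mathcomp Require Import gproduct automorphism.
Set Implicit Arguments. Unset Strict Implicit. Unset Printing Implicit Defensive.
Import GRing.Theory.
Local Open Scope ring_scope.

(* A finite (X,Y)-biset U is viewed as a left (X x Y)-set via
   (x,y).u = x u y^-1.  The transitive biset (X x Y)/L (left cosets of a
   subgroup L of X x Y) has stabilizers conjugate to L, and iso classes of
   transitive bisets <-> conjugacy classes of subgroups of X x Y.

   An element of kB(X,Y) is REPRESENTED by a formal k-combination
   f : {ffun {set gX*gY} -> k}, standing for  sum_L f(L) [(X x Y)/L]
   (sets L that are not subgroups of X x Y are ignored).
   Two representations denote the same element of kB(X,Y) iff they have the
   same coefficient on each iso class of transitive bisets ([bequiv]). *)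

Notation kB k gX gY := {ffun {set (gX * gY)} -> k^o}.

Section Burnside.
Variable k : fieldType.

Section Basic.
Variables (gX gY : finGroupType) (X : {group gX}) (Y : {group gY}).

Definition bsub (L : {set (gX * gY)}) : bool :=
  group_set L && (L \subset setX X Y).

(* coefficient of the iso class of [(X x Y)/N] in the element represented by f *)
Definition bcls (f : kB k gX gY) : kB k gX gY :=
  [ffun N => \sum_(L : {set (gX * gY)} | bsub L && (N \in (L :^: setX X Y)%g)) f L].

Definition bequiv (f g : kB k gX gY) : Prop := bcls f = bcls g.

Definition bdelta (L : {set (gX * gY)}) : kB k gX gY := [ffun N => (N == L)%:R].

(* transitive biset free on the left and on the right:
   stabilizer L meets X x 1 and 1 x Y trivially *)
Definition bifree (L : {set (gX * gY)}) : bool :=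
  bsub L && [forall p in L, (p.1 == 1%g) == (p.2 == 1%g)].

Definition inkA (f : kB k gX gY) : Prop :=
  exists g : kB k gX gY, bequiv f g /\ forall L, g L != 0 -> bifree L.

End Basic.

(* opposite biset: [(X x Y)/L]^op = [(Y x X)/swap(L)] *)
Definition bop (gX gY : finGroupType) (f : kB k gX gY) : kB k gY gX :=
  [ffun N : {set (gY * gX)} => f [set (p.2, p.1) | p in N]].

Section Comp.
Variables (gX gY gZ : finGroupType) (X : {group gX}) (Y : {group gY}) (Z : {group gZ}).

Definition G3 : {set (gX * (gY * gZ))} := setX X (setX Y Z).

(* stabilizer of (u,v) under (x,y,z).(u,v) = ((x,y)u, (y,z)v) *)
Definition stab3 (u : {set (gX * gY)}) (v : {set (gY * gZ)}) :=
  [set g in G3 | (((g.1, g.2.1) *: u)%g == u) && (((g.2.1, g.2.2) *: v)%g == v)].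

Definition p13 (S : {set (gX * (gY * gZ))}) : {set (gX * gZ)} :=
  [set (g.1, g.2.2) | g in S].

(* [(X x Y)/L] x_Y [(Y x Z)/M]: the X x Z-orbits of the balanced product
   correspond to the X x Y x Z-orbits on pairs of cosets (u,v), the stabilizer
   in X x Z of [u,v] being p13 (stab3 u v).  Each orbit is counted once via
   the weight |stab|/|G3| summed over its points. *)
Definition compL (L : {set (gX * gY)}) (M : {set (gY * gZ)}) : kB k gX gZ :=
  \sum_(u in lcosets L (setX X Y)) \sum_(v in lcosets M (setX Y Z))
     ((#|stab3 u v|%:R / #|G3|%:R) *: bdelta (p13 (stab3 u v))).

Definition bcomp (f : kB k gX gY) (g : kB k gY gZ) : kB k gX gZ :=
  \sum_(L : {set (gX * gY)} | bsub X Y L) \sum_(M : {set (gY * gZ)} | bsub Y Z M)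
     ((f L * g M) *: compL L M).

End Comp.

Definition iso_proper_sub (gK gH : finGroupType) (K : {group gK}) (H : {group gH}) : Prop :=
  exists H' : {group gH}, (H' \proper H)%g /\ (K \isog H')%g.

Inductive inkIA (gX gH : finGroupType) (X : {group gX}) (H : {group gH}) :
    kB k gX gH -> Prop :=
| kIA_prod (gK : finGroupType) (K : {group gK}) (a : kB k gX gK) (b : kB k gK gH) :
    iso_proper_sub K H -> inkA X K a -> inkA K H b -> inkIA X H (bcomp X K H a b)
| kIA_zero : inkIA X H 0
| kIA_add f g : inkIA X H f -> inkIA X H g -> inkIA X H (f + g)
| kIA_scale (c : k) f : inkIA X H f -> inkIA X H (c *: f)
| kIA_equiv f g : bequiv X H f g -> inkIA X H f -> inkIA X H g.

Section Out.
Variables (gH : finGroupType) (H : {group gH}).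

Definition Iso (s : {perm gH}) : kB k gH gH := bdelta [set (s h, h) | h in H].

Definition innerb (s : {perm gH}) : bool :=
  [exists x in H, [forall h in H, s h == (h ^ x)%g]].

(* tau (pi gamma) = t, where pi : kA(H,H) -> kAbar(H,H) ~= kOut(H) is the
   quotient map (Iso_sigma mod kI_A <-> class of sigma in Out(H)) and tau is
   the coefficient of 1 in kOut(H): gamma = sum_sigma c_sigma Iso_sigma
   mod kI_A(H,H), and the coefficient of 1 = Inn(H) is the sum of c over
   inner automorphisms. *)
Definition taupi (g : kB k gH gH) (t : k) : Prop :=
  exists c : {ffun {perm gH} -> k},
    \sum_(s in Aut H | innerb s) c s = t /\
    inkIA H H (g - \sum_(s in Aut H) (c s *: Iso s)).

End Out.

End Burnside.

(* A transitive biset [(X x H)/L] free on both sides has |L| <= |H|, and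
   elements of kI_A(X,H) factor through groups smaller than H, so their
   coefficients vanish on classes of size |H|.  If the second projection of L
   is a proper subgroup S of H, then [(X x H)/L] = [(X x S)/L] x_S [(S x H)/Delta(S)]
   lies in kI_A(X,H).  For the remaining L (second projection H), tau pi(L^op x_X M)
   is the coefficient of Delta(H) in L^op x_X M, which is nonzero exactly when L
   and M are conjugate.  Hence if alpha is orthogonal to every [(X x H)/M], its
   coefficients on these classes all vanish, and alpha lies in kI_A(X,H). *)

From HB Require Import structures.
From mathcomp Require Import all_boot all_order all_algebra all_fingroup.
From mathcomp Require Import gproduct automorphism.
Set Implicit Arguments. Unset Strict Implicit. Unset Printing Implicit Defensive.
Import GRing.Theory.
Local Open Scope ring_scope.

Section ClassCoefficients.
Variable k : fieldType.
Variables (gX gY : finGroupType) (X : {group gX}) (Y : {group gY}).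
Local Notation G := (setX X Y).

Lemma bclsE (f : kB k gX gY) N :
  bcls X Y f N = \sum_(L | bsub X Y L && (N \in L :^: G)%g) f L.
Proof. by rewrite ffunE. Qed.

Lemma bclsD (f g : kB k gX gY) : bcls X Y (f + g) = bcls X Y f + bcls X Y g.
Proof.
by apply/ffunP=> N; rewrite !ffunE -big_split; apply: eq_bigr => L _; rewrite ffunE.
Qed.

Lemma bclsZ c (f : kB k gX gY) : bcls X Y (c *: f) = c *: bcls X Y f.
Proof.
by apply/ffunP=> N; rewrite !ffunE scaler_sumr; apply: eq_bigr => L _; rewrite ffunE.
Qed.

Lemma bcls0 : bcls X Y (0 : kB k gX gY) = 0.
Proof. by apply/ffunP=> N; rewrite !ffunE big1 // => L _; rewrite ffunE. Qed.

Lemma bclsN (f : kB k gX gY) : bcls X Y (- f) = - bcls X Y f.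
Proof. by rewrite -scaleN1r bclsZ scaleN1r. Qed.

Lemma bcls_sum I (r : seq I) (P : pred I) (F : I -> kB k gX gY) :
  bcls X Y (\sum_(i <- r | P i) F i) = \sum_(i <- r | P i) bcls X Y (F i).
Proof. exact: (big_morph _ bclsD bcls0). Qed.

Lemma bsubJ L g : bsub X Y L -> g \in G -> bsub X Y (L :^ g)%g.
Proof.
case/andP=> gL sLG Gg; apply/andP; split.
  exact: (@groupP _ (conjG_group (Group gL) g)).
by rewrite -(conjGid Gg) conjSg.
Qed.

Lemma bsub_conjugates L N : bsub X Y L -> (N \in L :^: G)%g -> bsub X Y N.
Proof. by move=> bL /imsetP[g Gg ->]; apply: bsubJ. Qed.

Lemma bcls_bdelta (D N : {set gX * gY}) :
  bcls X Y (bdelta k D) N = (bsub X Y D && (N \in D :^: G)%g)%:R.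
Proof.
rewrite bclsE; case: (boolP (bsub X Y D && _)) => c.
  rewrite (bigD1 D) //= big1 ?addr0; first by rewrite ffunE eqxx.
  by move=> L /andP[_ nLD]; rewrite ffunE (negbTE nLD).
rewrite big1 // => L cL; rewrite ffunE; case: eqP => // E.
by rewrite -E cL in c.
Qed.

Lemma bdelta_expansion (f : kB k gX gY) : f = \sum_L f L *: bdelta k L.
Proof.
apply/ffunP => N; rewrite sum_ffunE (bigD1 N) //= big1 ?addr0 => [|L nL].
  by rewrite !ffunE eqxx [_ *: _]mulr1.
by rewrite !ffunE eq_sym (negbTE nL) [_ *: _]mulr0.
Qed.

End ClassCoefficients.

Section CharZero.
Variable k : fieldType.
Hypothesis k0 : [pchar k] =i pred0.

Lemma natr_neq0 n : (0 < n)%N -> (n%:R : k) != 0.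
Proof. by move=> n0; rewrite (proj1 (pcharf0P k) k0) -lt0n. Qed.

Lemma natr_card_group_neq0 (gT : finGroupType) (G : {group gT}) : (#|G|%:R : k) != 0.
Proof. by rewrite natr_neq0 ?cardG_gt0. Qed.

Variables (gX gY : finGroupType) (X : {group gX}) (Y : {group gY}).
Local Notation G := (setX X Y).

Lemma sum_bsub_by_class (V : lmodType k) (a : kB k gX gY) (F : {set gX * gY} -> V) :
  (forall L g, bsub X Y L -> g \in G -> F (L :^ g)%g = F L) ->
  \sum_(L | bsub X Y L) a L *: F L =
  \sum_(N | bsub X Y N) (bcls X Y a N / #|(N :^: G)%g|%:R) *: F N.
Proof.
move=> FJ.
under [RHS]eq_bigr => N _ do rewrite bclsE mulr_suml scaler_suml.
rewrite (exchange_big_dep (bsub X Y)) /=; last by move=> N L _ /andP[].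
apply: eq_bigr => L bL.
rewrite (eq_bigr (fun _ => (a L / #|(L :^: G)%g|%:R) *: F L)); last first.
  by move=> N /andP[_ /andP[_ /imsetP[g Gg ->]]]; rewrite FJ // conjugates_conj lcoset_id.
rewrite sumr_const -scaler_nat scalerA.
have -> : #|[pred N | bsub X Y N && (bsub X Y L && (N \in (L :^: G)%g))]|
          = #|(L :^: G)%g|.
  apply: eq_card => N; rewrite !inE bL /=.
  by case NL: (N \in _); rewrite ?andbF // (bsub_conjugates bL NL).
rewrite mulrC -mulrA mulVf ?mulr1 // natr_neq0 //.
by apply/card_gt0P; exists L; apply: (orbit_refl 'Js).
Qed.

Lemma sum_bsub_bequiv (V : lmodType k) (a a' : kB k gX gY) (F : {set gX * gY} -> V) :
  (forall L g, bsub X Y L -> g \in G -> F (L :^ g)%g = F L) ->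
  bequiv X Y a a' ->
  \sum_(L | bsub X Y L) a L *: F L = \sum_(L | bsub X Y L) a' L *: F L.
Proof. by move=> FJ e; rewrite !sum_bsub_by_class // e. Qed.

End CharZero.

Lemma lcosetsJ (gT : finGroupType) (L : {set gT}) (G : {group gT}) g :
  g \in G -> lcosets (L :^ g)%g G = [set (u :* g)%g | u in lcosets L G].
Proof.
move=> Gg; apply/setP=> U; apply/lcosetsP/imsetP.
  case=> x Gx ->; exists ((x * g^-1) *: L)%g.
    by apply/lcosetsP; exists (x * g^-1)%g; rewrite ?groupM ?groupV.
  by rewrite conjsgE -lcosetM mulgA.
case=> u /lcosetsP[x Gx ->] ->; exists (x * g)%g; first by rewrite groupM.
by rewrite conjsgE -lcosetM mulgK mulgA.
Qed.

Section CompositionInvariance.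
Variable k : fieldType.
Hypothesis k0 : [pchar k] =i pred0.
Variables (gX gY gZ : finGroupType) (X : {group gX}) (Y : {group gY}) (Z : {group gZ}).

Lemma stab3_rcosetl u v g : stab3 X Y Z (u :* g)%g v = stab3 X Y Z u v.
Proof. by apply/setP=> x; rewrite !inE mulgA (inj_eq (@rcoset_inj _ g)). Qed.

Lemma stab3_rcosetr u v g : stab3 X Y Z u (v :* g)%g = stab3 X Y Z u v.
Proof.
by apply/setP=> x; rewrite !inE [in X in _ && (_ && X)]mulgA (inj_eq (@rcoset_inj _ g)).
Qed.

Lemma compLJl (L : {set gX * gY}) M g : g \in setX X Y ->
  compL k X Y Z (L :^ g)%g M = compL k X Y Z L M.
Proof.
move=> Gg; rewrite /compL (lcosetsJ _ Gg) big_imset /=; last first.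
  by move=> u u' _ _; apply: rcoset_inj.
by apply: eq_bigr => u _; apply: eq_bigr => v _; rewrite stab3_rcosetl.
Qed.

Lemma compLJr (L : {set gX * gY}) (M : {set gY * gZ}) g : g \in setX Y Z ->
  compL k X Y Z L (M :^ g)%g = compL k X Y Z L M.
Proof.
move=> Gg; rewrite /compL; apply: eq_bigr => u _.
rewrite (lcosetsJ _ Gg) big_imset /=; last by move=> v v' _ _; apply: rcoset_inj.
by apply: eq_bigr => v _; rewrite stab3_rcosetr.
Qed.

Lemma bcomp_bdeltar (a : kB k gX gY) (M : {set gY * gZ}) : bsub Y Z M ->
  bcomp X Y Z a (bdelta k M) = \sum_(L | bsub X Y L) a L *: compL k X Y Z L M.
Proof.
move=> bM; rewrite /bcomp; apply: eq_bigr => L _.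
rewrite (bigD1 M) //= big1 ?addr0; last first.
  by move=> M' /andP[_ nM]; rewrite ffunE (negbTE nM) mulr0 scale0r.
by rewrite ffunE eqxx mulr1.
Qed.

Lemma bcomp_bdelta (L : {set gX * gY}) (M : {set gY * gZ}) :
  bsub X Y L -> bsub Y Z M -> bcomp X Y Z (bdelta k L) (bdelta k M) = compL k X Y Z L M.
Proof.
move=> bL bM; rewrite bcomp_bdeltar // (bigD1 L) //= big1 ?addr0.
  by rewrite ffunE eqxx scale1r.
by move=> L' /andP[_ nL]; rewrite ffunE (negbTE nL) scale0r.
Qed.

Lemma bcomp_bequivl (a a' : kB k gX gY) (b : kB k gY gZ) :
  bequiv X Y a a' -> bcomp X Y Z a b = bcomp X Y Z a' b.
Proof.
move=> e; rewrite /bcomp.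
under eq_bigr => L _ do under eq_bigr => M _ do rewrite -scalerA.
under [RHS]eq_bigr => L _ do under eq_bigr => M _ do rewrite -scalerA.
under eq_bigr => L _ do rewrite -scaler_sumr.
under [RHS]eq_bigr => L _ do rewrite -scaler_sumr.
apply: (sum_bsub_bequiv k0) e => L g _ Gg.
by apply: eq_bigr => M _; rewrite compLJl.
Qed.

Lemma bcomp_bequivr (a : kB k gX gY) (b b' : kB k gY gZ) :
  bequiv Y Z b b' -> bcomp X Y Z a b = bcomp X Y Z a b'.
Proof.
move=> e; rewrite /bcomp; apply: eq_bigr => L _.
under eq_bigr => M _ do rewrite mulrC -scalerA.
under [RHS]eq_bigr => M _ do rewrite mulrC -scalerA.
by apply: (sum_bsub_bequiv k0) e => M g _ Gg; rewrite compLJr.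
Qed.

End CompositionInvariance.

Definition swapset (T1 T2 : finType) (N : {set T1 * T2}) : {set T2 * T1} :=
  [set (p.2, p.1) | p in N].

Lemma mem_swapset (T1 T2 : finType) (N : {set T1 * T2}) p :
  (p \in swapset N) = ((p.2, p.1) \in N).
Proof.
case: p => a b; apply/imsetP/idP => [[[c d] cd [-> ->]] //|ba].
by exists (b, a).
Qed.

Lemma swapsetK (T1 T2 : finType) : cancel (@swapset T1 T2) (@swapset T2 T1).
Proof. by move=> N; apply/setP=> [[a b]]; rewrite !mem_swapset. Qed.

Lemma swapset_bij (T1 T2 : finType) : bijective (@swapset T1 T2).
Proof. exact: Bijective (@swapsetK _ _) (@swapsetK _ _). Qed.

Lemma swapsetJ (gA gB : finGroupType) (N : {set gA * gB}) g :
  swapset (N :^ g)%g = (swapset N :^ (g.2, g.1))%g.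
Proof. by apply/setP=> [[a b]]; rewrite mem_swapset !mem_conjg mem_swapset. Qed.

Section Opposite.
Variables (gX gY : finGroupType) (X : {group gX}) (Y : {group gY}).

Lemma group_set_swapset (L : {set gX * gY}) : group_set (swapset L) = group_set L.
Proof.
apply/group_setP/group_setP => [] [L1 LM]; split.
- by move: L1; rewrite mem_swapset.
- move=> x y Lx Ly; have := LM (x.2, x.1) (y.2, y.1).
  by rewrite !mem_swapset /= -!surjective_pairing; apply.
- by rewrite mem_swapset.
- by move=> x y; rewrite !mem_swapset; apply: LM.
Qed.

Lemma bsub_swapset (L : {set gX * gY}) : bsub Y X (swapset L) = bsub X Y L.
Proof.
rewrite /bsub group_set_swapset; congr (_ && _).
apply/subsetP/subsetP => sub p.
  move=> Lp; have := sub (p.2, p.1).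
  by rewrite mem_swapset -surjective_pairing !inE andbC; apply.
by rewrite mem_swapset => /sub; rewrite !inE andbC.
Qed.

Lemma conjugates_swapset (L : {set gX * gY}) (N : {set gY * gX}) :
  (N \in swapset L :^: setX Y X)%g = (swapset N \in L :^: setX X Y)%g.
Proof.
have Gswap (gA gB : finGroupType) (A : {group gA}) (B : {group gB}) g :
  g \in setX A B -> (g.2, g.1) \in setX B A by rewrite !inE andbC.
apply/imsetP/imsetP => [] [g Gg E]; exists (g.2, g.1); rewrite ?Gswap //.
  by rewrite E swapsetJ swapsetK.
by rewrite -[N]swapsetK E swapsetJ.
Qed.

Lemma bopE (k : fieldType) (f : kB k gX gY) N : bop f N = f (swapset N).
Proof. by rewrite ffunE. Qed.

Lemma bcls_bop (k : fieldType) (f : kB k gX gY) N :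
  bcls Y X (bop f) N = bcls X Y f (swapset N).
Proof.
rewrite !bclsE (reindex _ (onW_bij _ (@swapset_bij _ _))) /=.
apply: eq_big => L; first by rewrite bsub_swapset conjugates_swapset.
by move=> _; rewrite bopE swapsetK.
Qed.

Lemma bop_bequiv (k : fieldType) (f f' : kB k gX gY) :
  bequiv X Y f f' -> bequiv Y X (bop f) (bop f').
Proof. by move=> e; apply/ffunP=> N; rewrite !bcls_bop e. Qed.

End Opposite.

Lemma lcoset_stabE (gT : finGroupType) (L : {set gT}) a x : group_set L ->
  ((x *: (a *: L)) == a *: L)%g = (x ^ a \in L)%g.
Proof.
move=> gL; have -> : L = Group gL by [].
rewrite -lcosetM; apply/eqP/idP => [E|xa].
  by have := lcoset_refl (Group gL) (x * a)%g; rewrite E mem_lcoset.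
by apply/lcoset_eqP; rewrite mem_lcoset.
Qed.

Lemma lcoset_fixE (gT : finGroupType) (L : {set gT}) x : group_set L ->
  ((x *: L) == L)%g = (x \in L).
Proof. by move=> gL; have := lcoset_stabE 1%g x gL; rewrite lcoset1 conjg1. Qed.

Section Bifree.
Variables (gX gY : finGroupType) (X : {group gX}) (Y : {group gY}).
Variable L : {set gX * gY}.
Hypothesis fL : bifree X Y L.

Lemma bifree_inj1 (x y : gX) (z : gY) : (x, z) \in L -> (y, z) \in L -> x = y.
Proof.
case/andP: fL => /andP[gL _] /forall_inP bf h1 h2.
have := groupM (h1 : (x, z) \in Group gL) (groupVr (h2 : (y, z) \in Group gL)).
move/bf => /=; rewrite mulgV eqxx => /eqP/eqP.
by move/eqP; rewrite -eq_mulgV1 => /eqP.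
Qed.

Lemma bifree_inj2 (x : gX) (y z : gY) : (x, y) \in L -> (x, z) \in L -> y = z.
Proof.
case/andP: fL => /andP[gL _] /forall_inP bf h1 h2.
have := groupM (h1 : (x, y) \in Group gL) (groupVr (h2 : (x, z) \in Group gL)).
move/bf => /=; rewrite mulgV eqxx => /eqP/esym/eqP.
by move/eqP; rewrite -eq_mulgV1 => /eqP.
Qed.

Lemma bifreeJ g : g \in setX X Y -> bifree X Y (L :^ g)%g.
Proof.
case/andP: fL => bL /forall_inP bf Gg; rewrite /bifree bsubJ //=.
by apply/forall_inP => p; rewrite mem_conjg => /bf /=; rewrite !conjg_eq1.
Qed.

Lemma bifree_card : (#|L| <= #|Y|)%N.
Proof.
have /andP[/andP[_ sL] _] := fL.
rewrite -(@card_in_imset _ _ snd L) => [|[x y] [x' y'] Lp Lq /= E]; last first.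
  by subst y'; rewrite (bifree_inj1 Lp Lq).
apply: subset_leq_card; apply/subsetP => _ /imsetP[p Lp ->].
by have := subsetP sL _ Lp; rewrite inE => /andP[].
Qed.

End Bifree.

Section Stabilizers.
Variables (gX gY gZ : finGroupType) (X : {group gX}) (Y : {group gY}) (Z : {group gZ}).

Lemma stab3P (L : {set gX * gY}) (M : {set gY * gZ}) a b g :
  group_set L -> group_set M ->
  (g \in stab3 X Y Z (a *: L)%g (b *: M)%g) =
  [&& g \in G3 X Y Z, (g.1, g.2.1) \in (L :^ a^-1)%g & (g.2.1, g.2.2) \in (M :^ b^-1)%g].
Proof. by move=> gL gM; rewrite inE !lcoset_stabE // !mem_conjgV. Qed.

Lemma mem_stab3 (L : {set gX * gY}) (M : {set gY * gZ}) g :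
  group_set L -> group_set M ->
  (g \in stab3 X Y Z L M) =
  [&& g \in G3 X Y Z, (g.1, g.2.1) \in L & (g.2.1, g.2.2) \in M].
Proof.
move=> gL gM; rewrite -[L in LHS]lcoset1 -[M in LHS]lcoset1 stab3P //.
by rewrite !invg1 !conjsg1.
Qed.

(* A point of the balanced product of two free bisets is determined by its middle coordinate. *)
Lemma card_p13_stab3 (L : {set gX * gY}) (M : {set gY * gZ}) a b :
  bifree X Y L -> bifree Y Z M -> a \in setX X Y -> b \in setX Y Z ->
  (#|p13 (stab3 X Y Z (a *: L)%g (b *: M)%g)| <= #|Y|)%N.
Proof.
move=> fL fM Ga Gb.
have gL : group_set L by case/andP: fL => /andP[].
have gM : group_set M by case/andP: fM => /andP[].
have fL' := bifreeJ fL (groupVr Ga); have fM' := bifreeJ fM (groupVr Gb).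
apply: leq_trans (leq_imset_card _ _) _.
rewrite -(@card_in_imset _ _ (fun g : gX * (gY * gZ) => g.2.1)); last first.
  move=> [g1 [g2 g3]] [h1 [h2 h3]]; rewrite !stab3P //= => /and3P[_ A1 A2] /and3P[_ B1 B2] E.
  by subst h2; rewrite (bifree_inj1 fL' A1 B1) (bifree_inj2 fM' A2 B2).
apply: subset_leq_card; apply/subsetP => y /imsetP[g]; rewrite stab3P // => /and3P[G _ _] ->.
by move: G; rewrite !inE => /and3P[].
Qed.

Variable k : fieldType.

Lemma compL_eq0_card (L : {set gX * gY}) (M : {set gY * gZ}) (N : {set gX * gZ}) :
  bifree X Y L -> bifree Y Z M -> (#|Y| < #|N|)%N -> compL k X Y Z L M N = 0.
Proof.
move=> fL fM YN; rewrite /compL sum_ffunE big1 // => u /lcosetsP[a Ga ->].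
rewrite sum_ffunE big1 // => v /lcosetsP[b Gb ->].
rewrite !ffunE; case: eqP => [E|] /=; last by rewrite scaler0.
by have := card_p13_stab3 fL fM Ga Gb; rewrite -E leqNgt YN.
Qed.

Hypothesis k0 : [pchar k] =i pred0.

Lemma bcomp_eq0_card (a : kB k gX gY) (b : kB k gY gZ) (N : {set gX * gZ}) :
  inkA X Y a -> inkA Y Z b -> (#|Y| < #|N|)%N -> bcomp X Y Z a b N = 0.
Proof.
move=> [a' [ea fa]] [b' [eb fb]] YN.
rewrite (bcomp_bequivl k0 _ _ ea) (bcomp_bequivr k0 _ _ eb) /bcomp sum_ffunE big1 // => L _.
rewrite sum_ffunE big1 // => M _; rewrite ffunE.
have [->|/fa fL] := eqVneq (a' L) 0; first by rewrite mul0r scale0r.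
have [->|/fb fM] := eqVneq (b' M) 0; first by rewrite mulr0 scale0r.
by rewrite compL_eq0_card ?scaler0.
Qed.

End Stabilizers.

Lemma inkIA_bcls_eq0 (k : fieldType) (gX gH : finGroupType) (X : {group gX}) (H : {group gH})
    (f : kB k gX gH) :
  [pchar k] =i pred0 -> inkIA X H f ->
  forall N : {set gX * gH}, (#|H| <= #|N|)%N -> bcls X H f N = 0.
Proof.
move=> k0; elim=> {f}.
- move=> gK K a b [H' [pH' iso]] iA iB N HN.
  have KN : (#|K| < #|N|)%N.
    by rewrite (card_isog iso); apply: leq_trans (proper_card pH') HN.
  rewrite bclsE big1 // => L /andP[_ /imsetP[g _ E]].
  by rewrite (bcomp_eq0_card k0) // -(cardJg L g) -E.
- by move=> N _; rewrite bcls0 ffunE.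
- by move=> f g _ IHf _ IHg N HN; rewrite bclsD ffunE IHf // IHg // addr0.
- by move=> c f _ IHf N HN; rewrite bclsZ ffunE IHf // scaler0.
- by move=> f g e _ IHf N HN; rewrite -e IHf.
Qed.

Definition diagset (gH : finGroupType) (S : {set gH}) : {set gH * gH} :=
  [set (s, s) | s in S].

Section Diagonal.
Variables (gH : finGroupType) (H : {group gH}).

Lemma card_diagset : #|diagset H| = #|H|.
Proof. by rewrite card_imset // => x y [->]. Qed.

Lemma group_set_diagset (S : {group gH}) : group_set (diagset S).
Proof.
apply/group_setP; split; first by apply/imsetP; exists 1%g.
move=> _ _ /imsetP[x Sx ->] /imsetP[y Sy ->]; apply/imsetP; exists (x * y)%g => //.
by rewrite groupM.
Qed.

Lemma bifree_diagset (S : {group gH}) : S \subset H -> bifree S H (diagset S).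
Proof.
move=> sSH; apply/andP; split; first (apply/andP; split; first exact: group_set_diagset).
  by apply/subsetP => _ /imsetP[x Sx ->]; rewrite !inE Sx (subsetP sSH).
by apply/forall_inP => _ /imsetP[x Sx ->].
Qed.

Lemma bsub_Iso (s : {perm gH}) : s \in Aut H -> bsub H H [set (s h, h) | h in H].
Proof.
move=> sA; apply/andP; split.
  apply/group_setP; split.
    apply/imsetP; exists 1%g => //; congr (_, _).
    by have := morph1 (autm_morphism sA); rewrite /= autmE.
  move=> _ _ /imsetP[x Hx ->] /imsetP[y Hy ->]; apply/imsetP.
  exists (x * y)%g; rewrite ?groupM //.
  by have := morphM (autm_morphism sA) Hx Hy; rewrite /= autmE => ->.
by apply/subsetP => _ /imsetP[x Hx ->]; rewrite !inE Aut_closed.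
Qed.

Lemma diagset_conjugates_Iso (s : {perm gH}) : s \in Aut H ->
  (diagset H \in [set (s h, h) | h in H] :^: setX H H)%g = innerb H s.
Proof.
move=> sA; apply/imsetP/existsP => [[[a b]]|[x /andP[Hx /forall_inP sx]]].
  rewrite inE => /andP[Ha Hb] /= E.
  exists (b * a^-1)%g; rewrite groupM ?groupV //=; apply/forall_inP => h Hh.
  have : ((s h, h) ^ (a, b))%g \in diagset H.
    by rewrite E memJ_conjg; apply/imsetP; exists h.
  case/imsetP => y _ /= [E1 E2].
  have E3 : (s h ^ a)%g = (h ^ b)%g by apply: (etrans E1); symmetry; apply: E2.
  by apply/eqP; rewrite conjgM -E3 conjgK.
exists (x^-1, 1)%g; first by rewrite !inE groupV Hx group1.
rewrite /conjugate -imset_comp; apply: eq_in_imset => h Hh /=.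
rewrite (eqP (sx h Hh)).
have -> : ((h ^ x, h) ^ (x^-1, 1))%g = ((h ^ x) ^ x^-1, h ^ 1)%g by [].
by rewrite conjgK conjg1.
Qed.

(* Elements of kI_A(H,H) vanish on the class of Delta(H) = Iso_1, whose coefficient is tau pi. *)
Lemma taupi0_bcls_diagset (k : fieldType) (g : kB k gH gH) :
  [pchar k] =i pred0 -> taupi H g 0 -> bcls H H g (diagset H) = 0.
Proof.
move=> k0 [c [Hc hI]].
have := inkIA_bcls_eq0 k0 hI (N := diagset H); rewrite card_diagset leqnn => /(_ isT).
rewrite bclsD bclsN bcls_sum !ffunE sum_ffunE => /eqP; rewrite subr_eq0 => /eqP ->.
rewrite -[RHS]Hc big_mkcondr /=; apply: eq_bigr => s sA.
rewrite bclsZ ffunE /Iso bcls_bdelta bsub_Iso // diagset_conjugates_Iso //=.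
by case: (innerb H s); [apply: mulr1 | apply: mulr0].
Qed.

End Diagonal.

Section TransitiveCount.
Variables (gX gY gZ : finGroupType) (X : {group gX}) (Y : {group gY}) (Z : {group gZ}).
Variables (L : {set gX * gY}) (M : {set gY * gZ}).

Definition coset_pair (g : gX * (gY * gZ)) : {set gX * gY} * {set gY * gZ} :=
  (((g.1, g.2.1) : gX * gY) *: L, ((g.2.1, g.2.2) : gY * gZ) *: M)%g.

Lemma card_coset_pair_fiber g0 : g0 \in G3 X Y Z ->
  #|[set g in G3 X Y Z | coset_pair g == coset_pair g0]|
    = #|stab3 X Y Z (coset_pair g0).1 (coset_pair g0).2|.
Proof.
move=> G0; rewrite -(card_rcoset _ (g0^-1)%g); apply: eq_card => h.
move: G0; rewrite mem_rcoset invgK !inE => /and3P[G1 G2 G3'] /=.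
by rewrite !groupMr //; congr (_ && _); rewrite /coset_pair /= xpair_eqE -!lcosetM.
Qed.

Lemma coset_pair_in g : g \in G3 X Y Z ->
  ((coset_pair g).1 \in lcosets L (setX X Y)) && ((coset_pair g).2 \in lcosets M (setX Y Z)).
Proof.
rewrite !inE => /and3P[G1 G2 G3'].
by apply/andP; split; apply/lcosetsP;
  [exists (g.1, g.2.1) | exists (g.2.1, g.2.2)]; rewrite ?inE ?G1 ?G2 ?G3'.
Qed.

(* Orbit-stabilizer: each pair of cosets is hit |stab| times. *)
Lemma sum_card_stab3_transitive :
  (forall u v, u \in lcosets L (setX X Y) -> v \in lcosets M (setX Y Z) ->
     exists2 g, g \in G3 X Y Z & coset_pair g = (u, v)) ->
  (\sum_(u in lcosets L (setX X Y)) \sum_(v in lcosets M (setX Y Z)) #|stab3 X Y Z u v|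
     = #|G3 X Y Z|)%N.
Proof.
move=> tr.
transitivity (\sum_(u in lcosets L (setX X Y)) \sum_(v in lcosets M (setX Y Z))
                \sum_(g in G3 X Y Z) (coset_pair g == (u, v)) : nat)%N.
  apply: eq_bigr => u Uu; apply: eq_bigr => v Vv.
  have [g0 G0 E] := tr u v Uu Vv.
  have := card_coset_pair_fiber G0; rewrite E /= => <-.
  rewrite -sum1_card big_mkcond [RHS]big_mkcond /=; apply: eq_bigr => g _.
  by rewrite inE; case: (g \in _); case: (coset_pair g == _).
under eq_bigr => u _ do rewrite exchange_big /=.
rewrite exchange_big /= -sum1_card; apply: eq_bigr => g G.
have /andP[U1 V2] := coset_pair_in G.
rewrite (bigD1 (coset_pair g).1) //= [X in (_ + X)%N]big1 ?addn0; last first.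
  move=> u /andP[_ nu]; apply: big1 => v _.
  by case: eqP => // E; move: nu; rewrite -[u]/((u, v).1) -E eqxx.
rewrite (bigD1 (coset_pair g).2) //= [X in (_ + X)%N]big1 ?addn0.
  by rewrite /coset_pair eqxx.
move=> v /andP[_ nv]; case: eqP => // E.
by move: nv; rewrite -[v]/(((coset_pair g).1, v).2) -E eqxx.
Qed.

Lemma stab3_coset_pair g : group_set L -> group_set M -> g \in G3 X Y Z ->
  stab3 X Y Z (coset_pair g).1 (coset_pair g).2 = (stab3 X Y Z L M :^ g^-1)%g.
Proof.
move=> gL gM Gg; apply/setP => h.
rewrite /coset_pair /= stab3P // !mem_conjgV [RHS]in_set !lcoset_fixE //.
by rewrite /G3 groupJr.
Qed.

End TransitiveCount.

Lemma p13J (gX gY gZ : finGroupType) (S : {set gX * (gY * gZ)}) (a : gX * (gY * gZ)) :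
  p13 (S :^ a)%g = (p13 S :^ ((a.1, a.2.2) : gX * gZ))%g.
Proof. by rewrite /p13 /conjugate -!imset_comp; apply: eq_imset. Qed.

Section Factorization.
Variables (gX gH : finGroupType) (X : {group gX}) (S H : {group gH}).
Hypothesis sSH : S \subset H.
Variable L : {set gX * gH}.
Hypothesis bL : bsub X S L.

Let gL : group_set L. Proof. by case/andP: bL. Qed.

Lemma bsub_superset : bsub X H L.
Proof.
case/andP: bL => _ sL; rewrite /bsub gL; apply: subset_trans sL _.
by apply/subsetP => p; rewrite !inE => /andP[-> /(subsetP sSH)].
Qed.

Lemma p13_stab3_diagset : p13 (stab3 X S H L (diagset S)) = L.
Proof.
have sL : L \subset setX X S by case/andP: bL.
apply/setP => [[x y]]; apply/imsetP/idP => [[g]|Lxy].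
  rewrite mem_stab3 ?group_set_diagset //.
  by case/and3P=> _ A /imsetP[s _ [E1 E2]] [-> ->]; rewrite E2 -E1.
have := subsetP sL _ Lxy; rewrite !inE /= => /andP[Xx Sy].
exists (x, (y, y)) => //; rewrite mem_stab3 ?group_set_diagset //= Lxy.
by rewrite !inE Xx Sy (subsetP sSH) //=; apply/imsetP; exists y.
Qed.

Lemma coset_pair_diagset_onto u v :
  u \in lcosets L (setX X S) -> v \in lcosets (diagset S) (setX S H) ->
  exists2 g, g \in G3 X S H & coset_pair L (diagset S) g = (u, v).
Proof.
case/lcosetsP => a Ga -> /lcosetsP[b Gb ->].
move: Ga Gb; rewrite !inE => /andP[Xa Sa] /andP[Sb Hb].
exists (a.1, (a.2, b.2 * b.1^-1 * a.2))%g.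
  by rewrite !inE /= Xa Sa !groupM ?groupV // (subsetP sSH).
rewrite /coset_pair /= -surjective_pairing; congr (_, _).
apply/(@lcoset_eqP _ (Group (group_set_diagset S))); rewrite mem_lcoset.
apply/imsetP; exists (b.1^-1 * a.2)%g; first by rewrite groupM ?groupV.
rewrite (_ : (b^-1 * (a.2, b.2 * b.1^-1 * a.2))%g
           = ((b.1^-1 * a.2)%g, (b.2^-1 * (b.2 * b.1^-1 * a.2))%g)) //.
by rewrite -!mulgA mulKg.
Qed.

Lemma p13_stab3_diagset_conjugate u v :
  u \in lcosets L (setX X S) -> v \in lcosets (diagset S) (setX S H) ->
  exists2 c, c \in setX X H & p13 (stab3 X S H u v) = (L :^ c)%g.
Proof.
move=> Uu Vv; have [g G [<- <-]] := coset_pair_diagset_onto Uu Vv.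
exists (((g^-1).1, (g^-1).2.2) : gX * gH)%g.
  by move: (groupVr G); rewrite !inE => /and3P[-> _ ->].
by rewrite stab3_coset_pair ?group_set_diagset // p13J p13_stab3_diagset.
Qed.

Lemma compL_diagset_bequiv (k : fieldType) :
  [pchar k] =i pred0 -> bequiv X H (compL k X S H L (diagset S)) (bdelta k L).
Proof.
move=> k0; apply/ffunP => N; rewrite bcls_bdelta /compL bcls_sum sum_ffunE.
set c : k := (_ && _)%:R.
transitivity (\sum_(u in lcosets L (setX X S)) \sum_(v in lcosets (diagset S) (setX S H))
   (#|stab3 X S H u v|%:R / #|G3 X S H|%:R) * c).
  apply: eq_bigr => u Uu; rewrite bcls_sum sum_ffunE; apply: eq_bigr => v Vv.
  rewrite bclsZ ffunE bcls_bdelta; congr (_ * _).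
  have [g Gg ->] := p13_stab3_diagset_conjugate Uu Vv.
  by rewrite /c bsubJ ?bsub_superset //= conjugates_conj lcoset_id.
under eq_bigr => u _ do rewrite -mulr_suml -mulr_suml -natr_sum.
rewrite -mulr_suml -mulr_suml -natr_sum sum_card_stab3_transitive.
  by rewrite divff ?mul1r ?(natr_card_group_neq0 k0 (G3 X S H)).
exact: coset_pair_diagset_onto.
Qed.

End Factorization.

Lemma inkA_bdelta (k : fieldType) (gX gY : finGroupType) (X : {group gX}) (Y : {group gY}) L :
  bifree X Y L -> inkA X Y (bdelta k L).
Proof.
move=> fL; exists (bdelta k L); split => // M; rewrite ffunE.
by have [->|] := eqVneq M L; rewrite ?eqxx.
Qed.

Definition p2set (gX gH : finGroupType) (L : {set gX * gH}) : {set gH} := [set p.2 | p in L].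

(* Such an L lives in X x S with S = p2set L < H, and [(X x H)/L] factors through S. *)
Lemma bdelta_inkIA (k : fieldType) (gX gH : finGroupType) (X : {group gX}) (H : {group gH})
    (L : {set gX * gH}) :
  [pchar k] =i pred0 -> bifree X H L -> ~~ (H \subset p2set L) -> inkIA X H (bdelta k L).
Proof.
move=> k0 fL nHS; have /andP[/andP[gL sL] _] := fL.
have gS : group_set (p2set L).
  apply/group_setP; split.
    by apply/imsetP; exists 1%g; rewrite ?group1 //; apply: (@group1 _ (Group gL)).
  move=> _ _ /imsetP[p Lp ->] /imsetP[q Lq ->]; apply/imsetP; exists (p * q)%g => //.
  exact: (@groupM _ (Group gL)).
pose S := Group gS.
have sSH : S \subset H.
  by apply/subsetP => _ /imsetP[p Lp ->]; have := subsetP sL _ Lp; rewrite inE => /andP[].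
have bLS : bsub X S L.
  rewrite /bsub gL; apply/subsetP => p Lp; rewrite inE.
  have := subsetP sL _ Lp; rewrite inE => /andP[-> _] /=.
  by apply/imsetP; exists p.
have bD : bsub S H (diagset S) by case/andP: (bifree_diagset sSH).
apply: (@kIA_equiv _ _ _ _ _ (bcomp X S H (bdelta k L) (bdelta k (diagset S)))).
  by rewrite bcomp_bdelta //; apply: compL_diagset_bequiv.
apply: kIA_prod.
- by exists S; split; [rewrite properE sSH | apply: isog_refl].
- by apply: inkA_bdelta; rewrite /bifree bLS; case/andP: fL.
- exact: inkA_bdelta (bifree_diagset sSH).
Qed.

Section DiagonalCoefficient.
Variables (gX gH : finGroupType) (X : {group gX}) (H : {group gH}).

Lemma bifree_conjg_eq (L M : {set gX * gH}) e :
  bifree X H L -> bifree X H M ->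
  (forall h, h \in H -> exists2 x, (x, h) \in L & (x, h ^ e)%g \in M) ->
  (L :^ ((1%g, e) : gX * gH))%g = M.
Proof.
move=> fL fM LM; have /andP[/andP[_ sL] _] := fL.
have sub : (L :^ ((1%g, e) : gX * gH) \subset M)%g.
  apply/subsetP => p; rewrite mem_conjg => Lp.
  set q := (p ^ _)%g in Lp.
  have -> : p = (q ^ ((1%g, e) : gX * gH))%g by rewrite /q conjgKV.
  have Hq : q.2 \in H by have := subsetP sL _ Lp; rewrite inE => /andP[].
  have [x Lx Mx] := LM _ Hq.
  have xq : x = q.1 by apply: (bifree_inj1 fL Lx); rewrite -surjective_pairing.
  have -> : (q ^ ((1%g, e) : gX * gH))%g = ((q.1 ^ 1)%g, (q.2 ^ e)%g) by [].
  by rewrite conjg1 -xq.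
apply/eqP; rewrite eqEcard sub cardJg /=; apply: leq_trans (bifree_card fM) _.
apply: leq_trans (leq_imset_card snd L); apply: subset_leq_card.
by apply/subsetP => h Hh; have [x Lx _] := LM _ Hh; apply/imsetP; exists (x, h).
Qed.

Lemma conjugates_of_diagset_p13 (L M : {set gX * gH}) u v :
  bifree X H L -> bifree X H M ->
  u \in lcosets (swapset L) (setX H X) -> v \in lcosets M (setX X H) ->
  (diagset H \in p13 (stab3 H X H u v) :^: setX H H)%g ->
  (L \in M :^: setX X H)%g.
Proof.
move=> fL fM /lcosetsP[a Ga ->] /lcosetsP[b Gb ->] /imsetP[d Gd dE].
have gM : group_set M by case/andP: fM => /andP[].
have gsL : group_set (swapset L) by rewrite group_set_swapset; case/andP: fL => /andP[].
pose c : gX * gH := ((a^-1).2, (a^-1).1)%g.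
have Gc : c \in setX X H by move: (groupVr Ga); rewrite !inE andbC.
pose L1 := (L :^ c)%g; pose M1 := (M :^ b^-1)%g.
have fM1 : bifree X H M1 by apply: bifreeJ; rewrite ?groupV.
pose e := (d.1 * d.2^-1)%g.
have /andP[Hd1 Hd2] : (d.1 \in H) && (d.2 \in H) by move: Gd; rewrite !inE.
have EM : (L1 :^ ((1%g, e) : gX * gH))%g = M1.
  apply: bifree_conjg_eq (bifreeJ fL Gc) fM1 _ => h Hh.
  have : ((h, (h ^ e)%g) : gH * gH) \in p13 (stab3 H X H (a *: swapset L)%g (b *: M)%g).
    rewrite -(conjsgK d (p13 _)) -dE mem_conjgV.
    apply/imsetP; exists (h ^ d.1)%g; first by rewrite groupJ.
    apply: (@etrans _ _ ((h ^ d.1)%g, ((h ^ e) ^ d.2)%g)); first by [].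
    by rewrite -conjgM /e mulgKV.
  case/imsetP => g; rewrite stab3P // => /and3P[_ A B] [-> ->]; exists g.2.1 => //.
  have sL1 : (swapset L :^ a^-1)%g = swapset L1.
    by rewrite /L1 swapsetJ /= [in LHS](surjective_pairing a).
  by move: A; rewrite sL1 mem_swapset.
have Ge : ((1%g, e) : gX * gH) \in setX X H by rewrite inE group1 groupM ?groupV.
have : (M \in L :^: setX X H)%g.
  apply/imsetP; exists (c * (1%g, e) * b)%g; first by rewrite !groupM.
  by rewrite !conjsgM -/L1 EM /M1 conjsgKV.
by rewrite -[_ \in _]/(M \in orbit 'Js _ L) orbit_sym.
Qed.

Variable M : {set gX * gH}.
Hypotheses (fM : bifree X H M) (full : H \subset p2set M).

Lemma p13_stab3_swapset : p13 (stab3 H X H (swapset M) M) = diagset H.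
Proof.
have gM : group_set M by case/andP: fM => /andP[].
have gsM : group_set (swapset M) by rewrite group_set_swapset.
have sM : M \subset setX X H by case/andP: fM => /andP[].
apply/setP => [[h1 h2]]; apply/imsetP/imsetP => [[g]|[h Hh [-> ->]]].
  rewrite mem_stab3 // mem_swapset => /and3P[G A B] [-> ->].
  exists g.1; last by rewrite -(bifree_inj2 fM A B).
  by move: G; rewrite !inE => /and3P[].
have /imsetP[p Mp Eh] := subsetP full _ Hh.
have := subsetP sM _ Mp; rewrite inE => /andP[Xp _].
exists (h, (p.1, h)) => //.
by rewrite mem_stab3 // mem_swapset /= !inE Hh Xp /= Eh -surjective_pairing Mp.
Qed.

(* Every term of the coefficient is a nonnegative integer, and the one at
   (swapset M, M) is positive. *)
Lemma bcls_compL_swapset_neq0 (k : fieldType) :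
  [pchar k] =i pred0 -> bcls H H (compL k H X H (swapset M) M) (diagset H) != 0.
Proof.
move=> k0; rewrite /compL bcls_sum sum_ffunE.
under eq_bigr => u _ do rewrite bcls_sum sum_ffunE.
under eq_bigr => u _ do under eq_bigr => v _ do
  rewrite bclsZ ffunE bcls_bdelta [_ *: _]mulrAC -natrM.
under eq_bigr => u _ do rewrite -mulr_suml -natr_sum.
rewrite -mulr_suml -natr_sum mulf_neq0 ?invr_eq0 ?(natr_card_group_neq0 k0 (G3 H X H)) //.
apply: (natr_neq0 k0).
have U0 : swapset M \in lcosets (swapset M) (setX H X).
  by apply/lcosetsP; exists 1%g; rewrite ?group1 ?lcoset1.
have V0 : M \in lcosets M (setX X H).
  by apply/lcosetsP; exists 1%g; rewrite ?group1 ?lcoset1.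
rewrite (bigD1 _ U0) /= (bigD1 _ V0) /= -addnA addn_gt0; apply/orP; left.
rewrite p13_stab3_swapset muln_gt0; apply/andP; split.
  by apply/card_gt0P; exists 1%g; rewrite inE !group1 !mul1g !eqxx.
have := bsub_Iso (group1 (Aut_group H)).
rewrite (_ : [set (_ h, h) | h in H] = diagset H) => [->|]; last first.
  by apply: eq_imset => h; rewrite perm1.
by rewrite lt0b; apply: (orbit_refl 'Js).
Qed.

End DiagonalCoefficient.

Lemma p2set_fullJ (gX gH : finGroupType) (X : {group gX}) (H : {group gH})
    (L : {set gX * gH}) g :
  H \subset p2set L -> g \in setX X H -> H \subset p2set (L :^ g)%g.
Proof.
move=> full Gg; apply/subsetP => h Hh.
have Hg2 : g.2 \in H by move: Gg; rewrite inE => /andP[].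
have /imsetP[p Lp Ep] := subsetP full _ (groupJ Hh (groupVr Hg2)).
apply/imsetP; exists (p ^ g)%g; first by rewrite memJ_conjg.
by rewrite -[RHS]/(p.2 ^ g.2)%g -Ep conjgKV.
Qed.

Section Nondegeneracy.
Variable k : fieldType.
Hypothesis k0 : [pchar k] =i pred0.
Variables (gX gH : finGroupType) (X : {group gX}) (H : {group gH}).
Variable a : kB k gX gH.
Hypothesis fa : forall L, a L != 0 -> bifree X H L.
Hypothesis diag0 : forall M, bifree X H M ->
  bcls H H (bcomp H X H (bop a) (bdelta k M)) (diagset H) = 0.

Lemma bcls_full_eq0 M : bifree X H M -> H \subset p2set M -> bcls X H a M = 0.
Proof.
move=> fM full; have bM : bsub X H M by case/andP: fM.
have := diag0 fM; rewrite bcomp_bdeltar // bcls_sum sum_ffunE.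
under eq_bigr => L _ do rewrite bclsZ ffunE bopE.
rewrite (reindex _ (onW_bij _ (@swapset_bij _ _))) /=.
under eq_bigl => L do rewrite bsub_swapset.
under eq_bigr => L _ do rewrite swapsetK.
rewrite (bigID (fun L => L \in (M :^: setX X H)%g)) /= [X in _ + X]big1 ?addr0; last first.
  move=> L /andP[bL nL]; have [->|/fa fL] := eqVneq (a L) 0; first by rewrite scale0r.
  rewrite /compL bcls_sum sum_ffunE big1 ?scaler0 // => u Uu.
  rewrite bcls_sum sum_ffunE big1 // => v Vv.
  rewrite bclsZ ffunE bcls_bdelta.
  case: (boolP (diagset H \in _)) => [/(conjugates_of_diagset_p13 fL fM Uu Vv) LM|_].
    by rewrite LM in nL.
  by rewrite andbF scaler0.
rewrite (eq_bigr (fun L => a L * bcls H H (compL k H X H (swapset M) M) (diagset H))).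
  rewrite -mulr_suml => /eqP; rewrite mulf_eq0 (negbTE (bcls_compL_swapset_neq0 fM full k0)).
  rewrite orbF => /eqP <-; rewrite bclsE; apply: eq_bigl => L.
  by case: (bsub X H L) => //=; rewrite -[_ \in _]/(L \in orbit 'Js _ M) orbit_sym.
move=> L /andP[_ /imsetP[g Gg ->]]; rewrite swapsetJ compLJl //.
by move: Gg; rewrite !inE andbC.
Qed.

Lemma full_part_bequiv0 :
  bequiv (k := k) X H (\sum_(L | H \subset p2set L) a L *: bdelta k L) 0.
Proof.
apply/ffunP => N; rewrite bcls_sum sum_ffunE bcls0 ffunE.
under eq_bigr => L _ do rewrite bclsZ ffunE bcls_bdelta.
have [/andP[fN fullN]|nN] := boolP (bifree X H N && (H \subset p2set N)).
  rewrite -[RHS](bcls_full_eq0 fN fullN) bclsE big_mkcond [RHS]big_mkcond /=.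
  apply: eq_bigr => L _; case: (boolP (bsub X H L && _)) => [/andP[bL NL]|nL].
    have /imsetP[g Gg ->] : (L \in N :^: setX X H)%g.
      by rewrite -[_ \in _]/(L \in orbit 'Js _ N) orbit_sym.
    by rewrite (p2set_fullJ fullN Gg) [_ *: _]mulr1.
  by case: ifP => // _; apply: mulr0.
rewrite big1 // => L full; have [->|/fa fL] := eqVneq (a L) 0; first by rewrite scale0r.
case: (boolP (bsub X H L && _)) => [/andP[bL /imsetP[g Gg E]]|_]; last exact: scaler0.
by move: nN; rewrite E (bifreeJ fL Gg) (p2set_fullJ full Gg).
Qed.

Lemma nonfull_part_inkIA :
  inkIA (k := k) X H (\sum_(L | ~~ (H \subset p2set L)) a L *: bdelta k L).
Proof.
apply: big_ind => [|f g|L nfull]; [exact: kIA_zero | exact: kIA_add |].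
have [->|/fa fL] := eqVneq (a L) 0; first by rewrite scale0r; apply: kIA_zero.
by apply: kIA_scale; apply: bdelta_inkIA.
Qed.

End Nondegeneracy.

Unset Implicit Arguments.

Theorem proposition12p1 (k : fieldType) (gX gH : finGroupType)
    (X : {group gX}) (H : {group gH}) :
  [pchar k] =i pred0 ->
  forall alpha : kB k gX gH, inkA X H alpha ->
  (forall beta : kB k gX gH, inkA X H beta ->
     taupi H (bcomp H X H (bop alpha) beta) 0) ->
  inkIA X H alpha.
Proof.
move=> k0 alpha [a [ea fa]] orth.
have diag0 M : bifree X H M ->
    bcls H H (bcomp H X H (bop a) (bdelta k M)) (diagset H) = 0.
  move=> fM; rewrite -(bcomp_bequivl k0 _ _ (bop_bequiv ea)).
  by apply: (taupi0_bcls_diagset k0); apply: orth; apply: inkA_bdelta.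
apply: (kIA_equiv (esym ea)).
rewrite (bdelta_expansion a) (bigID (fun L => H \subset p2set L)) /=.
apply: kIA_add; last exact: nonfull_part_inkIA.
apply: kIA_equiv (esym (full_part_bequiv0 k0 fa diag0)) _.
exact: kIA_zero.
Qed.
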